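(* For every connected undirected graph $G$ on exactly $4$ vertices, $\mathbf{C}_G=\frac34$; that is, $\mathrm{Var}\, M_G f\le \frac34 \mathrm{Var} f$ for all $f\colon V\to\mathbb{R}$, and the constant $\frac34$ cannot be replaced by any smaller number. (Concretely, this holds for each of the six such graphs up to isomorphism: the complete graph $K_4$, the star $S_4$ (one central vertex adjacent to three leaves), the cycle $C_4$, the path $P_4$, the paw graph (a triangle with one pendant vertex attached to one triangle vertex), and the diamond graph ($K_4$ minus one edge).)
   Context: Let $G=(V,E)$ be a finite connected undirected graph, with graph distance $d_G(v,w)$ equal to the number of edges in a shortest path from $v$ to $w$. The ball is $\mathrm{B}_G(v,r)=\{w\in V: d_G(v,w)\le r\}$. The Hardy–Littlewood maximal operator on $G$ is $(M_G f)(v)=\max_{r\ge 0}\frac{1}{|\mathrm{B}_G(v,r)|}\sum_{w\in \mathrm{B}_G(v,r)}|f(w)|$. The variation is $\mathrm{Var} f=\sum_{vw\in E}|f(v)-f(w)|$ (each edge counted once). $\mathbf{C}_G$ is the smallest number in $[0,\infty]$ such that $\mathrm{Var}\, M_G f\le \mathbf{C}_G \mathrm{Var} f$ for all $f\colon V\to\mathbb{R}$. *)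

From HB Require Import structures.
From mathcomp Require Import all_boot all_order all_algebra.
Set Implicit Arguments. Unset Strict Implicit. Unset Printing Implicit Defensive.
Import Order.TTheory GRing.Theory Num.Theory.
Local Open Scope ring_scope.

Definition simple_graph (T : finType) (e : rel T) : Prop :=
  symmetric e /\ irreflexive e.

Definition connected_graph (T : finType) (e : rel T) : Prop :=
  forall x y : T, connect e x y.

(* Ball B_G(v,r) = {w | d_G(v,w) <= r}: w is reachable from v by a walk
   with at most r edges (a walk with n edges is an n-tuple of successors). *)
Definition ball (T : finType) (e : rel T) (v : T) (r : nat) : {set T} :=
  [set w | [exists n : 'I_r.+1,
             [exists p : n.-tuple T, path e v p && (last v p == w)]]].

Definition ball_avg (R : realFieldType) (T : finType) (e : rel T)
  (f : T -> R) (v : T) (r : nat) : R :=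
  (\sum_(w in ball e v r) `|f w|) / #|ball e v r|%:R.

(* Hardy--Littlewood maximal operator: maximum over radii r >= 0.  Since
   every distance in a graph on #|T| vertices is < #|T|, the balls (hence the
   averages) are constant for r >= #|T|, so radii r < #|T|.+1 suffice. *)
Definition maxop (R : realFieldType) (T : finType) (e : rel T)
  (f : T -> R) (v : T) : R :=
  \big[Num.max/0]_(r < #|T|.+1) ball_avg e f v r.

(* Variation: sum over edges, each edge counted once; since e is symmetric
   and irreflexive, this is half of the sum over ordered adjacent pairs. *)
Definition var (R : realFieldType) (T : finType) (e : rel T) (f : T -> R) : R :=
  (\sum_(x : T) \sum_(y : T | e x y) `|f x - f y|) / 2.

(** The balls of a graph on four vertices can be computed, so at every vertex
    [M f] is the maximum of at most four explicit averages of [|f|]; as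
    [M f = M |f|] and [Var |f| <= Var f], one may assume [f >= 0].
    [Var (M f) <= 3/4 Var f] is then a piecewise linear inequality in the four
    values of [f], checked by linear arithmetic after splitting every maximum
    and every absolute value into its cases.  The indicator function of a
    vertex of minimal degree attains the ratio [3/4].  Both facts are invariant
    under relabelling, and every connected graph on four vertices is
    isomorphic to one of six representatives, which is decided by enumerating
    the [2^6] edge sets and the [4!] relabellings. *)

From HB Require Import structures.
From mathcomp Require Import all_boot all_order all_algebra.
From mathcomp Require Import lra.
Import Order.TTheory GRing.Theory Num.Theory.
Set Implicit Arguments. Unset Strict Implicit. Unset Printing Implicit Defensive.
Local Open Scope ring_scope.

Definition var_bound_sharp (R : realFieldType) (T : finType) (c : R) (e : rel T) :=
  (forall f : T -> R, var e (maxop e f) <= c * var e f) /\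
  (exists2 f : T -> R, 0 < var e f & c * var e f <= var e (maxop e f)).

Section Extensionality.
Variables (R : realFieldType) (T : finType).

Lemma eq_var (e : rel T) (f1 f2 : T -> R) : f1 =1 f2 -> var e f1 = var e f2.
Proof.
by move=> f12; congr (_ / _); apply: eq_bigr => x _; apply: eq_bigr => y _; rewrite !f12.
Qed.

Lemma eq_maxop (e : rel T) (f1 f2 : T -> R) : f1 =1 f2 -> maxop e f1 =1 maxop e f2.
Proof.
move=> f12 v; apply: eq_bigr => r _; congr (_ / _).
by apply: eq_bigr => w _; rewrite f12.
Qed.

Variables (e1 e2 : rel T).
Hypothesis e12 : e1 =2 e2.

Lemma eq_ball_rel v r : ball e1 v r = ball e2 v r.
Proof.
apply/setP => w; rewrite !inE; apply: eq_existsb => n; apply: eq_existsb => p.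
by rewrite (eq_path e12).
Qed.

Lemma eq_maxop_rel (f : T -> R) : maxop e1 f =1 maxop e2 f.
Proof. by move=> v; apply: eq_bigr => r _; rewrite /ball_avg eq_ball_rel. Qed.

Lemma eq_var_rel (f : T -> R) : var e1 f = var e2 f.
Proof.
congr (_ / _); apply: eq_bigr => x _.
by apply: eq_bigl => y; rewrite e12.
Qed.

Lemma eq_var_bound_sharp (c : R) : var_bound_sharp c e1 -> var_bound_sharp c e2.
Proof.
have Mvar (f : T -> R) : var e2 (maxop e2 f) = var e1 (maxop e1 f).
  by rewrite -eq_var_rel; apply: eq_var => v; rewrite eq_maxop_rel.
case=> bound [f f_gt0 f_sharp]; split=> [g|]; first by rewrite Mvar -eq_var_rel.
by exists f; rewrite ?Mvar -eq_var_rel.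
Qed.

End Extensionality.

Section Relabelling.
Variables (T1 T2 : finType) (g : T1 -> T2) (e : rel T2).
Hypothesis g_bij : bijective g.

Lemma ball_relpre v r : ball e (g v) r = g @: ball (relpre g e) v r.
Proof.
have [h _ hK] := g_bij.
apply/setP => w; rewrite -[w]hK (mem_imset _ _ (bij_inj g_bij)) !inE.
apply: eq_existsb => n; apply/existsP/existsP => [[p p_walk]|[p p_walk]].
  exists (map_tuple h p).
  by rewrite /= -path_map -(inj_eq (bij_inj g_bij)) -last_map (mapK hK).
by exists (map_tuple g p); rewrite /= path_map last_map (inj_eq (bij_inj g_bij)).
Qed.

Variable R : realFieldType.

Lemma maxop_relpre (f : T2 -> R) v : maxop e f (g v) = maxop (relpre g e) (f \o g) v.
Proof.
rewrite /maxop (bij_eq_card g_bij); apply: eq_bigr => r _.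
rewrite /ball_avg ball_relpre (card_imset _ (bij_inj g_bij)) big_imset //.
by move=> x y _ _; apply: bij_inj.
Qed.

Lemma var_relpre (f : T2 -> R) : var e f = var (relpre g e) (f \o g).
Proof.
have [h gK hK] := g_bij.
rewrite /var (reindex g); last by exists h => x _; [apply: gK | apply: hK].
congr (_ / _); apply: eq_bigr => x _.
by rewrite (reindex g) //; exists h => y _; [apply: gK | apply: hK].
Qed.

Lemma var_bound_sharp_relpre (c : R) :
  var_bound_sharp c (relpre g e) -> var_bound_sharp c e.
Proof.
have [h gK _] := g_bij.
case=> bound [f f_gt0 f_sharp]; split=> [f'|].
  by rewrite !var_relpre (eq_var _ (maxop_relpre f')); apply: bound.
have fhgE : f \o h \o g =1 f by move=> x /=; rewrite gK.
have MfhgE : maxop e (f \o h) \o g =1 maxop (relpre g e) f.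
  by move=> v; rewrite /= maxop_relpre (eq_maxop _ fhgE).
by exists (f \o h); rewrite !var_relpre ?(eq_var _ MfhgE) (eq_var _ fhgE).
Qed.

Lemma connect_relpre x y : connect e (g x) (g y) -> connect (relpre g e) x y.
Proof.
have [h _ hK] := g_bij.
move/connectP=> [p p_path p_last]; apply/connectP; exists (map h p).
  by rewrite -path_map (mapK hK).
by apply: (bij_inj g_bij); rewrite p_last -(last_map g) (mapK hK).
Qed.

End Relabelling.

Section NonNegativeReduction.
Variables (R : realFieldType) (T : finType) (e : rel T).

Lemma maxop_norm (f : T -> R) : maxop e (fun x => `|f x|) =1 maxop e f.
Proof.
move=> v; apply: eq_bigr => r _; congr (_ / _).
by apply: eq_bigr => w _; rewrite normr_id.
Qed.

Lemma var_norm_le (f : T -> R) : var e (fun x => `|f x|) <= var e f.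
Proof.
rewrite ler_pM2r ?invr_gt0 ?ltr0n //.
by do 2![apply: ler_sum => ? _]; apply: ler_dist_dist.
Qed.

Lemma var_maxop_bound_nonneg (c : R) : 0 <= c ->
  (forall f : T -> R, (forall x, 0 <= f x) -> var e (maxop e f) <= c * var e f) ->
  forall f : T -> R, var e (maxop e f) <= c * var e f.
Proof.
move=> c_ge0 bound f; rewrite -(eq_var _ (maxop_norm f)).
by apply: le_trans (bound _ (fun x => normr_ge0 (f x))) _; rewrite ler_wpM2l ?var_norm_le.
Qed.

End NonNegativeReduction.

Fixpoint walkb (T : eqType) (s : seq T) (e : rel T) (v : T) (n : nat) (w : T) : bool :=
  if n is n'.+1 then has (fun u => walkb s e v n' u && e u w) s else v == w.

Definition within (T : eqType) (s : seq T) (e : rel T) (v : T) (r : nat) (w : T) :=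
  has (fun n => walkb s e v n w) (iota 0 r.+1).

Section Balls.
Variables (T : finType) (e : rel T).

Lemma walkbP (s : seq T) : (forall u, u \in s) -> forall v n w,
  [exists p : n.-tuple T, path e v p && (last v p == w)] = walkb s e v n w.
Proof.
move=> s_all v; elim=> [|n IHn] w /=.
  apply/existsP/idP => [[p]|/eqP <-]; first by rewrite (tuple0 p).
  by exists [tuple]; rewrite /= eqxx.
apply/existsP/hasP => [[[p p_size]] /= /andP[p_path /eqP p_last]|[u _]].
  move: p_size p_path p_last; case/lastP: p => [//|q x].
  rewrite size_rcons rcons_path last_rcons => /eqP[q_size] /andP[q_path q_x] <-.
  exists (last v q); first exact: s_all.
  rewrite q_x andbT -IHn; apply/existsP.
  by exists (Tuple (introT eqP q_size)); rewrite /= q_path eqxx.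
rewrite -IHn => /andP[/existsP[q /andP[q_path /eqP q_last]] e_uw].
have qw_size : size (rcons q w) == n.+1 by rewrite size_rcons size_tuple.
by exists (Tuple qw_size); rewrite /= rcons_path last_rcons q_path q_last e_uw eqxx.
Qed.

Lemma mem_ballE (s : seq T) : (forall u, u \in s) -> forall v r w,
  (w \in ball e v r) = within s e v r w.
Proof.
move=> s_all v r w; rewrite inE /within; apply/existsP/hasP => [[n]|[n]].
  by rewrite (walkbP s_all) => walk_n; exists (val n); rewrite // mem_iota ltn_ord.
rewrite mem_iota /= add0n -(walkbP s_all) => n_lt walk_n.
by exists (Ordinal n_lt).
Qed.

Lemma connect_mem_ball x y : connect e x y -> y \in ball e x #|T|.-1.
Proof.
move/connectP => [p p_path ->]; case/shortenP: p_path => q q_path q_uniq _.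
have q_lt_T : (size q < #|T|)%N.
  by rewrite -ltnS -[(size q).+1]/(size (x :: q)) -(card_uniqP q_uniq) ltnS max_card.
have q_size : (size q < #|T|.-1.+1)%N by rewrite prednK // (leq_ltn_trans _ q_lt_T).
rewrite inE; apply/existsP; exists (Ordinal q_size); apply/existsP.
by exists (in_tuple q); rewrite q_path eqxx.
Qed.

End Balls.

(** Unlike [enum 'I_4] and [ord_enum 4], this enumeration reduces under [vm_compute]. *)
Definition ord4 : seq 'I_4 :=
  [:: Ordinal (isT : 0 < 4); Ordinal (isT : 1 < 4);
      Ordinal (isT : 2 < 4); Ordinal (isT : 3 < 4)]%N.

Definition vertex4 (k : nat) : 'I_4 := nth ord0 ord4 k.

Definition graph4 (es : seq (nat * nat)) : rel 'I_4 :=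
  fun i j => ((i : nat, j : nat) \in es) || ((j : nat, i : nat) \in es).

Definition pairs4 : seq (nat * nat) := [:: (0, 1); (0, 2); (0, 3); (1, 2); (1, 3); (2, 3)]%N.

Lemma simple_graph4 es : all (fun p => p.1 != p.2) es -> simple_graph (graph4 es).
Proof.
move=> /allP es_irr; split=> [i j|i]; first by rewrite /graph4 orbC.
by rewrite /graph4 orbb; apply/negP => /es_irr; rewrite eqxx.
Qed.

Lemma mem_ord4 i : i \in ord4.
Proof. by case: i => -[|[|[|[|]]]] // i_lt; rewrite !inE -!val_eqE. Qed.

Lemma big_ord4 (R : Type) (idx : R) (op : Monoid.com_law idx) (P : pred 'I_4) (F : 'I_4 -> R) :
  \big[op/idx]_(i | P i) F i = \big[op/idx]_(i <- ord4 | P i) F i.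
Proof.
apply: perm_big; apply: uniq_perm; rewrite ?index_enum_uniq //.
by move=> i; rewrite mem_index_enum mem_ord4.
Qed.

(** Unlike [big_ord4], this keeps the operator [+%R], which [lra] recognises. *)
Lemma sum_ord4 (V : nmodType) (P : pred 'I_4) (F : 'I_4 -> V) :
  \sum_(i | P i) F i = \sum_(i <- ord4 | P i) F i.
Proof. exact: big_ord4. Qed.

Lemma var_ord (R : realFieldType) n (e : rel 'I_n) (f : 'I_n -> R) : simple_graph e ->
  var e f = \sum_(i < n) \sum_(j < n | (i < j)%N && e i j) `|f i - f j|.
Proof.
case=> e_sym e_irr; pose t i j := if e i j then `|f i - f j| else 0.
pose S := \sum_(i < n) \sum_(j < n) if (i < j)%N then t i j else 0.
have lower_half : \sum_(i < n) \sum_(j < n) (if (j < i)%N then t i j else 0) = S.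
  rewrite exchange_big; apply: eq_bigr => i _; apply: eq_bigr => j _.
  by rewrite /t e_sym distrC.
have row_split i : \sum_(j | e i j) `|f i - f j| =
    \sum_(j < n) (if (i < j)%N then t i j else 0) + \sum_(j < n) (if (j < i)%N then t i j else 0).
  rewrite -big_split big_mkcond; apply: eq_bigr => j _ /=.
  case: (ltngtP i j) => [||/val_inj ->] /=; rewrite ?ltnn ?addr0 ?add0r //.
  by rewrite /t e_irr.
have -> : \sum_(i < n) \sum_(j < n | (i < j)%N && e i j) `|f i - f j| = S.
  apply: eq_bigr => i _; rewrite big_mkcond; apply: eq_bigr => j _.
  by rewrite /t; case: (i < j)%N.
rewrite /var (eq_bigr _ (fun i _ => row_split i)) big_split lower_half -/S.
(* [big_split] returns the monoid operation, which [lra] does not parse. *)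
change (S *+ 2 / 2 = S); lra.
Qed.

(* Stated without a filter: unfolding a filtered sum with [big_cons] duplicates its tail. *)
Lemma var4E (R : realFieldType) (E : rel 'I_4) (f : 'I_4 -> R) : simple_graph E ->
  var E f = \sum_(i <- ord4) \sum_(j <- ord4) if (i < j)%N && E i j then `|f i - f j| else 0.
Proof.
by move/var_ord->; rewrite sum_ord4; apply: eq_bigr => i _; rewrite sum_ord4 big_mkcond.
Qed.

Definition ball4 (E : rel 'I_4) (v : 'I_4) (r : nat) : bitseq :=
  [seq within ord4 E v r w | w <- ord4].

Definition balls4 (E : rel 'I_4) (v : 'I_4) : seq bitseq :=
  undup [seq ball4 E v r | r <- iota 0 5].

Definition mask_avg (R : realFieldType) (F : 'I_4 -> R) (b : bitseq) : R :=
  (\sum_(w <- mask b ord4) `|F w|) / (size (mask b ord4))%:R.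

Lemma mask_avg_ge0 (R : realFieldType) (F : 'I_4 -> R) b : 0 <= mask_avg F b.
Proof. by rewrite divr_ge0 ?sumr_ge0. Qed.

Lemma ball_avg4E (R : realFieldType) (E : rel 'I_4) (F : 'I_4 -> R) v r :
  ball_avg E F v r = mask_avg F (ball4 E v r).
Proof.
have ballE := mem_ballE E mem_ord4 v r.
rewrite /ball_avg /mask_avg /ball4 size_mask ?size_map //.
rewrite -filter_mask big_filter count_map -sum1_count.
by rewrite -sum1_card !big_ord4 !(eq_bigl _ _ ballE).
Qed.

Lemma maxop4E (R : realFieldType) (E : rel 'I_4) (F : 'I_4 -> R) v :
  maxop E F v = \big[Num.max/0]_(b <- balls4 E v) mask_avg F b.
Proof.
rewrite /maxop /balls4 card_ord big_undup ?big_map; last exact: maxxx.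
by rewrite -(big_mkord xpredT); apply: eq_bigr => r _; rewrite ball_avg4E.
Qed.

Definition K4 : seq (nat * nat) := pairs4.
Definition star4 : seq (nat * nat) := [:: (0, 1); (0, 2); (0, 3)]%N.
Definition cycle4 : seq (nat * nat) := [:: (0, 1); (1, 2); (2, 3); (0, 3)]%N.
Definition path4 : seq (nat * nat) := [:: (0, 1); (1, 2); (2, 3)]%N.
Definition paw : seq (nat * nat) := [:: (0, 1); (0, 2); (1, 2); (2, 3)]%N.
Definition diamond : seq (nat * nat) := [:: (0, 1); (0, 2); (1, 2); (1, 3); (2, 3)]%N.

Definition classes4 := [:: K4; star4; cycle4; path4; paw; diamond].

Lemma ord4_all (P : pred 'I_4) : all P ord4 -> forall i, P i.
Proof. by move/allP=> P_ord4 i; apply: P_ord4; apply: mem_ord4. Qed.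

Lemma vertex4K (i : 'I_4) : vertex4 i = i.
Proof. by apply/eqP; move: i; apply: ord4_all. Qed.

Lemma mem_pairs4 (i j : 'I_4) : ((i : nat, j : nat) \in pairs4) = (i < j)%N.
Proof.
apply/eqP; move: j; apply: ord4_all; move: i.
by apply: ord4_all (fun i => all _ ord4) _.
Qed.

Lemma graph4_edges (E : rel 'I_4) : simple_graph E ->
  E =2 graph4 [seq p <- pairs4 | E (vertex4 p.1) (vertex4 p.2)].
Proof.
case=> E_sym E_irr i j; rewrite /graph4 !mem_filter /= !vertex4K !mem_pairs4 (E_sym j i).
by case: ltngtP => [||/val_inj->]; rewrite ?andbT ?andbF ?orbF ?E_irr.
Qed.

Definition iso4b (E1 E2 : rel 'I_4) : bool :=
  has (fun s => all (fun x : 'I_4 => all (fun y : 'I_4 =>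
                  E1 (nth ord0 s x) (nth ord0 s y) == E2 x y) ord4) ord4)
    (permutations ord4).

Lemma iso4bP (E1 E2 : rel 'I_4) : iso4b E1 E2 ->
  exists2 h : 'I_4 -> 'I_4, bijective h & relpre h E1 =2 E2.
Proof.
case/hasP=> s; rewrite mem_permutations => s_perm /allP s_iso.
have s_size : size s = 4 by rewrite (perm_size s_perm).
have s_uniq : uniq s by rewrite (perm_uniq s_perm).
exists (fun i : 'I_4 => nth ord0 s i).
  apply: injF_bij => i j /eqP; rewrite nth_uniq ?s_size // => /eqP.
  exact: val_inj.
by move=> x y; apply/eqP; move/allP: (s_iso x (mem_ord4 x)); apply; apply: mem_ord4.
Qed.

Lemma graph4_classified (m : bitseq) : size m = 6 ->
  all (within ord4 (graph4 (mask m pairs4)) ord0 3) ord4 ->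
  has (fun C => iso4b (graph4 (mask m pairs4)) (graph4 C)) classes4.
Proof.
case: m => [|b1 [|b2 [|b3 [|b4 [|b5 [|b6 []]]]]]] // _.
by case: b1; case: b2; case: b3; case: b4; case: b5; case: b6; vm_compute.
Qed.

Lemma connected_graph4_classified (E : rel 'I_4) : simple_graph E -> connected_graph E ->
  exists2 C, C \in classes4 & exists2 h : 'I_4 -> 'I_4, bijective h & relpre h E =2 graph4 C.
Proof.
move=> E_simple E_conn; have E_edges := graph4_edges E_simple.
set es := [seq p <- _ | _] in E_edges.
have es_conn : all (within ord4 (graph4 es) ord0 3) ord4.
  apply/allP => w _; rewrite -(mem_ballE _ mem_ord4).
  have := @connect_mem_ball _ (graph4 es) ord0 w; rewrite card_ord; apply.
  by rewrite -(eq_connect E_edges).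
have es_mask : es = mask [seq E (vertex4 p.1) (vertex4 p.2) | p <- pairs4] pairs4.
  exact: filter_mask.
have := @graph4_classified [seq E (vertex4 p.1) (vertex4 p.2) | p <- pairs4].
rewrite size_map -es_mask => /(_ erefl es_conn)/hasP[C C_class /iso4bP[h h_bij h_iso]].
by exists C => //; exists h => // x y; rewrite /= E_edges; apply: h_iso.
Qed.

Lemma card4_graph_classified (T : finType) (e : rel T) :
  #|T| = 4 -> simple_graph e -> connected_graph e ->
  exists2 C, C \in classes4 & exists2 h : 'I_4 -> T, bijective h & relpre h e =2 graph4 C.
Proof.
move=> T4 [e_sym e_irr] e_conn.
pose g (i : 'I_4) : T := enum_val (cast_ord (esym T4) i).
have g_bij : bijective g.
  exists (fun x => cast_ord T4 (enum_rank x)) => [i | x]; rewrite /g.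
    by rewrite enum_valK cast_ordKV.
  by rewrite cast_ordK enum_rankK.
have g_simple : simple_graph (relpre g e) by split=> [i j | i]; [apply: e_sym | apply: e_irr].
have g_conn : connected_graph (relpre g e).
  by move=> i j; apply: (connect_relpre g_bij); apply: e_conn.
have [C C_class [h h_bij h_iso]] := connected_graph4_classified g_simple g_conn.
by exists C => //; exists (g \o h); first exact: bij_comp.
Qed.

Lemma max2_cases (R : realFieldType) (x y : R) :
  x <= Num.max x y /\ y <= Num.max x y /\ (Num.max x y = x \/ Num.max x y = y).
Proof.
by rewrite !le_max !lexx orbT; do 2!split=> //; case: (leP x y) => _; [right | left].
Qed.

Section MaxChains.
Variables (R : realFieldType) (x y z w : R).
Local Notation max3 := (Num.max x (Num.max y z)).
Local Notation max4 := (Num.max x (Num.max y (Num.max z w))).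

Lemma max3_cases : x <= max3 /\ y <= max3 /\ z <= max3 /\ (max3 = x \/ max3 = y \/ max3 = z).
Proof. by have := max2_cases y z; have := max2_cases x (Num.max y z); lra. Qed.

Lemma max4_cases :
  x <= max4 /\ y <= max4 /\ z <= max4 /\ w <= max4 /\
  (max4 = x \/ max4 = y \/ max4 = z \/ max4 = w).
Proof.
have := max2_cases z w; have := max2_cases y (Num.max z w).
by have := max2_cases x (Num.max y (Num.max z w)); lra.
Qed.

End MaxChains.

Lemma norm_bounds (R : realFieldType) (x : R) : x <= `|x| /\ - x <= `|x|.
Proof. by split; rewrite ?ler_normr ?lexx ?orbT. Qed.

Lemma norm_cases (R : realFieldType) (x : R) : `|x| = x \/ `|x| = - x.
Proof. by case: (ler0P x); [right | left]. Qed.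

Ltac eval_bool t :=
  let b := eval vm_compute in t in rewrite (_ : t = b); last by vm_compute.

Ltac expand_var4 :=
  rewrite !var4E; try solve [exact: simple_graph4];
  rewrite /ord4 !big_cons !big_nil;
  repeat match goal with |- context [((?i < ?j)%N && graph4 ?C ?i ?j)] =>
    eval_bool ((i < j)%N && graph4 C i j) end;
  rewrite /= ?addr0 ?add0r.

(* [maxop E f] is abstracted before the sums are unfolded: otherwise every
   [big_cons] rewrite tries to unify its pattern with the enumeration of
   ['I_5] hidden inside [maxop], which is prohibitively slow. *)
Ltac expand_var_maxop4 :=
  let MfE := fresh "MfE" in let M := fresh "M" in
  match goal with |- context [maxop ?E ?f] =>
  move: (maxop4E E f) => MfE; move: (maxop E f) MfE => M MfE;
  expand_var4; rewrite !MfE;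
  repeat match goal with |- context [balls4 ?E ?v] => eval_bool (balls4 E v) end;
  rewrite !big_cons !big_nil !(max_l (mask_avg_ge0 _ _)) /mask_avg /ord4 /=;
  rewrite !big_cons !big_nil /=; clear MfE end.

Ltac nonneg_facts f f_ge0 :=
  repeat match goal with |- context [f ?a] =>
    let x := fresh "x" in move: (f_ge0 a); set x := f a; clearbody x end.

Ltac max_facts :=
  repeat match goal with
  | |- context [Num.max ?x (Num.max ?y (Num.max ?z ?w))] =>
    let m := fresh "m" in
    move: (max4_cases x y z w); set m := Num.max x (Num.max y (Num.max z w)); clearbody m
  | |- context [Num.max ?x (Num.max ?y ?z)] =>
    let m := fresh "m" in move: (max3_cases x y z); set m := Num.max x (Num.max y z); clearbody m
  | |- context [Num.max ?x ?y] =>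
    let m := fresh "m" in move: (max2_cases x y); set m := Num.max x y; clearbody m
  end.

Ltac norm_facts :=
  repeat match goal with |- context [`|?x|] =>
    let n := fresh "n" in move: (norm_cases x); set n := `|x|; clearbody n end.

(* The norms [|f a - f b|] occur only on the larger side, so lower bounds suffice. *)
Ltac dist_facts f :=
  repeat match goal with |- context [`|f ?a - f ?b|] =>
    let n := fresh "d" in
    move: (norm_bounds (f a - f b)); set n := `|f a - f b|; clearbody n end.

Ltac eval_const :=
  repeat match goal with
  | |- context [`|?x|] =>
      first [rewrite (ger0_norm (x := x)); last lra | rewrite (ler0_norm (x := x)); last lra]
  | |- context [Num.max ?x ?y] =>
      first [rewrite (max_l (x := x) (y := y)); last lra | rewrite (max_r (x := x) (y := y)); last lra]
  end.

Ltac upper_bound4 :=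
  let f := fresh "f" in let f_ge0 := fresh "f_ge0" in
  move=> f f_ge0; expand_var_maxop4; rewrite !(ger0_norm (f_ge0 _));
  dist_facts f; nonneg_facts f f_ge0; max_facts; norm_facts; intros; lra.

Ltac lower_bound4 k :=
  exists (fun w : 'I_4 => ((w : nat) == k)%:R); [expand_var4 | expand_var_maxop4]; eval_const; lra.

Ltac var_bound_sharp4 k :=
  split; [apply: var_maxop_bound_nonneg; [lra | upper_bound4] | lower_bound4 k].

Lemma var_bound_sharp_K4 (R : realFieldType) : var_bound_sharp (3 / 4 : R) (graph4 K4).
Proof. var_bound_sharp4 0%N. Qed.

Lemma var_bound_sharp_star4 (R : realFieldType) : var_bound_sharp (3 / 4 : R) (graph4 star4).
Proof. var_bound_sharp4 1%N. Qed.

Lemma var_bound_sharp_cycle4 (R : realFieldType) : var_bound_sharp (3 / 4 : R) (graph4 cycle4).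
Proof. var_bound_sharp4 0%N. Qed.

Lemma var_bound_sharp_path4 (R : realFieldType) : var_bound_sharp (3 / 4 : R) (graph4 path4).
Proof. var_bound_sharp4 0%N. Qed.

Lemma var_bound_sharp_paw (R : realFieldType) : var_bound_sharp (3 / 4 : R) (graph4 paw).
Proof. var_bound_sharp4 3%N. Qed.

Lemma var_bound_sharp_diamond (R : realFieldType) : var_bound_sharp (3 / 4 : R) (graph4 diamond).
Proof. var_bound_sharp4 0%N. Qed.

Lemma var_bound_sharp_classes4 (R : realFieldType) C :
  C \in classes4 -> var_bound_sharp (3 / 4 : R) (graph4 C).
Proof.
case/(nthP [::]) => k k_lt <-; case: k k_lt => [|[|[|[|[|[|]]]]]] // _.
- exact: var_bound_sharp_K4.
- exact: var_bound_sharp_star4.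
- exact: var_bound_sharp_cycle4.
- exact: var_bound_sharp_path4.
- exact: var_bound_sharp_paw.
- exact: var_bound_sharp_diamond.
Qed.

Unset Implicit Arguments.

Theorem theorem2 (R : realFieldType) (T : finType) (e : rel T) :
  #|T| = 4%N -> simple_graph e -> connected_graph e ->
  (forall f : T -> R, var e (maxop e f) <= 3 / 4 * var e f) /\
  (forall c : R, c < 3 / 4 -> exists f : T -> R, c * var e f < var e (maxop e f)).
Proof.
move=> T4 e_simple e_conn.
have [C C_class [h h_bij h_iso]] := card4_graph_classified T4 e_simple e_conn.
have /(var_bound_sharp_relpre h_bij) [bound [f f_gt0 f_sharp]] :
    var_bound_sharp (3 / 4 : R) (relpre h e).
  by apply: eq_var_bound_sharp (var_bound_sharp_classes4 R C_class) => x y; rewrite h_iso.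
split=> // c c_lt; exists f.
by apply: lt_le_trans f_sharp; rewrite ltr_pM2r.
Qed.
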